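(* Let $N_1,N_2\ge 1$ be integers, let $0\le q<1$, and consider the following stochastic particle system (a version of the Biham--Middleton--Levine traffic model) on the toroidal lattice of cells $(i,j)$, $i\in\mathbb{Z}/N_1\mathbb{Z}$, $j\in\mathbb{Z}/N_2\mathbb{Z}$. There are $m<N_1N_2$ particles, each cell is vacant or occupied by exactly one particle, and at each moment every particle is of the first type or of the second type. Time is discrete, $t=0,1,2,\dots$. At each step, first all particles of the first type move: a first-type particle in cell $(i,j)$ moves to cell $(i,j+1)$ (index modulo $N_2$) if that cell is vacant, and stays in $(i,j)$ otherwise. Then all particles of the second type move, with respect to the configuration obtained after the first-type movement: a second-type particle in cell $(i,j)$ moves to $(i+1,j)$ (index modulo $N_1$) if that cell is vacant, and stays in $(i,j)$ otherwise. After that, each particle changes its type with probability $q$. A state (positions and types of all particles) is called a state of free movement if, whenever the system is in this state at some time $t_0$, then with probability $1$ at every step from $t_0$ on every particle moves (no particle is ever delayed). If the greatest common divisor of $N_1$ and $N_2$ is less than $3$, then no state in which there is at least one particle of the first type and at least one particle of the second type is a state of free movement.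
   Context: A particle is ''delayed'' at a step if the cell ahead of it (to the right along its row for the first type, upward along its column for the second type) is occupied at the moment it attempts to move, so that it stays in place. *)

From HB Require Import structures.
From mathcomp Require Import all_boot all_order all_algebra.
From mathcomp Require Import reals.
Set Implicit Arguments. Unset Strict Implicit. Unset Printing Implicit Defensive.
Import Order.TTheory GRing.Theory Num.Theory.
Local Open Scope ring_scope.

Definition cell (N1 N2 : nat) := ('I_N1 * 'I_N2)%type.

Section BML.
Variables (N1 N2 m : nat).
(* A configuration: position of each of the m particles and its type
   (true = first type, moving j -> j+1; false = second type, moving i -> i+1). *)
Implicit Types (p : 'I_m -> cell N1 N2) (t : 'I_m -> bool).

Definition right_of (c : cell N1 N2) : cell N1 N2 := (c.1, ordS c.2).
Definition down_of (c : cell N1 N2) : cell N1 N2 := (ordS c.1, c.2).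

Definition occupied p (c : cell N1 N2) : bool := [exists k, p k == c].

Definition move1 p t : 'I_m -> cell N1 N2 := fun k =>
  if t k && ~~ occupied p (right_of (p k)) then right_of (p k) else p k.

Definition move2 p t : 'I_m -> cell N1 N2 := fun k =>
  if ~~ t k && ~~ occupied p (down_of (p k)) then down_of (p k) else p k.

Definition step_pos p t := move2 (move1 p t) t.

Definition no_delay p t : bool :=
  [forall k, if t k then ~~ occupied p (right_of (p k))
             else ~~ occupied (move1 p t) (down_of (p k))].

Definition flip t (S : {set 'I_m}) : 'I_m -> bool :=
  fun k => if k \in S then ~~ t k else t k.

(* Probability, starting from (p, t), that no particle is delayed during
   the first n steps; each particle independently changes its type with
   probability q after each step. *)
Fixpoint prob_no_delay {R : realType} (q : R) (n : nat) p t : R :=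
  match n with
  | 0 => 1
  | n'.+1 =>
      if no_delay p t then
        \sum_(S : {set 'I_m})
          q ^+ #|S| * (1 - q) ^+ (m - #|S|) *
          prob_no_delay q n' (step_pos p t) (flip t S)
      else 0
  end.

(* The event is the decreasing intersection over n
   of "no delay during the first n steps", so (continuity of measure) it
   has probability 1 iff each finite-horizon probability equals 1. *)
Definition free_movement {R : realType} (q : R) p t : Prop :=
  forall n : nat, prob_no_delay q n p t = 1.

End BML.

From HB Require Import structures.
From mathcomp Require Import all_boot all_order all_algebra.
From mathcomp Require Import reals.
From mathcomp Require Import zify.
Import Order.TTheory GRing.Theory Num.Theory.
Set Implicit Arguments. Unset Strict Implicit.

(* With positive probability (1 - q)^m no particle changes its type, so a state
   of free movement stays one along the type-preserving trajectory and no
   particle is ever delayed on it.  There every first-type particle A moves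
   rigidly along its row, (a1, a2 + n), and every second-type particle B along
   its column, (b1 + n, b2).  As gcd(N1, N2) <= 2, the Chinese remainder
   theorem gives a time n with a2 + n + 1 = b2 and either b1 + n + 1 = a1
   (B wants to enter the cell A has just entered) or b1 + n = a1 (B sits right
   in front of A), so some particle is delayed. *)

Lemma chinese_gcd N1 N2 x y : 0 < N1 -> 0 < N2 ->
  x = y %[mod gcdn N1 N2] -> exists n, n = x %[mod N1] /\ n = y %[mod N2].
Proof.
wlog le_yx : N1 N2 x y / y <= x => [wlog N1_gt0 N2_gt0 xy|_ N2_gt0].
  have [/wlog|/ltnW le_xy] := leqP y x; first exact.
  rewrite gcdnC in xy.
  by have [n [? ?]] := wlog N2 N1 y x le_xy N2_gt0 N1_gt0 (esym xy); exists n.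
move/eqP; rewrite eqn_mod_dvd // => /dvdnP [k def_xy].
have [a _ bezout] := Bezoutl N1 N2_gt0.
exists (x + a * k * N1); split; first by rewrite addnC modnMDl.
apply/eqP; rewrite eqn_mod_dvd; last by rewrite (leq_trans le_yx) ?leq_addr.
have -> : x + a * k * N1 - y = k * (gcdn N2 N1 + a * N1).
  by rewrite gcdnC; nia.
exact: dvdn_mull.
Qed.

Lemma eqmod_or_eqmodS d x y : 0 < d <= 2 ->
  x = y %[mod d] \/ x.+1 = y %[mod d].
Proof. by case: d => [|[|[|]]] //= _; rewrite ?modn1; lia. Qed.

Lemma val_iter_ordS N (j : 'I_N) n : val (iter n (@ordS N) j) = (j + n) %% N.
Proof.
elim: n => [|n IHn] /=; first by rewrite addn0 modn_small.
by rewrite IHn -addn1 modnDml addn1 addnS.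
Qed.

Lemma iter_ordS_eq N (i j : 'I_N) n : (i + n = j %[mod N]) -> iter n (@ordS N) i = j.
Proof. by move=> eq_ij; apply: val_inj; rewrite val_iter_ordS eq_ij modn_small. Qed.

Lemma ordS_meeting_time N1 N2 (a1 b1 : 'I_N1) (a2 b2 : 'I_N2) :
  gcdn N1 N2 < 3 -> exists n, iter n.+1 (@ordS N2) a2 = b2 /\
    (iter n.+1 (@ordS N1) b1 = a1 \/ iter n (@ordS N1) b1 = a1).
Proof.
move=> gcd_lt3.
have N1_gt0 : 0 < N1 := leq_ltn_trans (leq0n a1) (ltn_ord a1).
have N2_gt0 : 0 < N2 := leq_ltn_trans (leq0n a2) (ltn_ord a2).
(* [n = x] brings B into row a1 at step n + 1, [n = y] brings A into column b2
   at step n + 1. *)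
set x := a1 + (N1 - b1.+1); set y := b2 + (N2 - a2.+1).
have b1x : b1.+1 + x = a1 %[mod N1] by rewrite addnCA subnKC ?ltn_ord // modnDr.
have a2y : a2.+1 + y = b2 %[mod N2] by rewrite addnCA subnKC ?ltn_ord // modnDr.
have gcd_le2 : 0 < gcdn N1 N2 <= 2 by rewrite gcdn_gt0 N1_gt0.
have [xy|xy] := eqmod_or_eqmodS x y gcd_le2;
  have [n [nx ny]] := chinese_gcd N1_gt0 N2_gt0 xy; exists n;
  (split; first by apply: iter_ordS_eq; rewrite -addSnnS -modnDmr ny modnDmr).
- by left; apply: iter_ordS_eq; rewrite -addSnnS -modnDmr nx modnDmr.
- by right; apply: iter_ordS_eq; rewrite -modnDmr nx modnDmr addnS -addSn.
Qed.

Section Dynamics.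
Variables (N1 N2 m : nat) (t : 'I_m -> bool).
Implicit Types (p : 'I_m -> cell N1 N2) (A B k : 'I_m).

Definition traj p n := iter n (fun p0 => step_pos p0 t) p.

Lemma move1_no_delay p k : no_delay p t -> t k -> move1 p t k = right_of (p k).
Proof. by move=> /forallP/(_ k) + tk; rewrite /move1 tk => ->. Qed.

Lemma no_delay_right p A B : no_delay p t -> t A -> p B != right_of (p A).
Proof.
move=> /forallP/(_ A); rewrite /occupied => + tA; rewrite tA.
by apply: contra => /eqP B_right; apply/existsP; exists B; rewrite B_right.
Qed.

Lemma no_delay_down p A B :
  no_delay p t -> t A -> ~~ t B -> right_of (p A) != down_of (p B).
Proof.
move=> nd tA tB; move/forallP/(_ B): nd (nd); rewrite (negbTE tB) => + nd.
apply: contra => /eqP A_below_B; apply/existsP; exists A.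
by rewrite move1_no_delay // A_below_B.
Qed.

Lemma step_pos_no_delay p k : no_delay p t ->
  step_pos p t k = if t k then right_of (p k) else down_of (p k).
Proof.
move=> nd; have /forallP/(_ k) := nd.
rewrite /step_pos /move2; case tk: (t k) => /= down_free.
  exact: move1_no_delay nd tk.
have -> : move1 p t k = p k by rewrite /move1 tk.
by rewrite down_free.
Qed.

Lemma traj_no_delay p n k : (forall n, no_delay (traj p n) t) ->
  traj p n k = if t k then ((p k).1, iter n (@ordS N2) (p k).2)
               else (iter n (@ordS N1) (p k).1, (p k).2).
Proof.
move=> nd; elim: n => [|n IHn]; first by rewrite /traj /=; case: (t k); case: (p k).
by rewrite /traj iterS -/(traj p n) step_pos_no_delay // IHn; case: (t k).
Qed.

End Dynamics.

Local Open Scope ring_scope.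

Lemma weighted_sum_eq1 (R : numDomainType) (I : finType) (w x : I -> R) i0 :
  (forall i, 0 <= w i) -> (forall i, x i <= 1) ->
  \sum_i w i * x i = \sum_i w i -> 0 < w i0 -> x i0 = 1.
Proof.
move=> w_ge0 x_le1 sum_wx w_i0_gt0.
have defect_ge0 i : true -> 0 <= w i * (1 - x i) by rewrite mulr_ge0 ?subr_ge0.
have : \sum_i w i * (1 - x i) = 0.
  rewrite -[RHS](subrr (\sum_i w i)) -[X in _ = _ - X]sum_wx -sumrB.
  by apply: eq_bigr => i _; rewrite mulrBr mulr1.
move/(psumr_eq0P defect_ge0)/(_ i0 isT)/eqP.
by rewrite mulf_eq0 gt_eqF //= subr_eq0 => /eqP.
Qed.

Section FreeMovement.
Variables (R : realType) (m : nat) (q : R).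

Definition flip_weight (S : {set 'I_m}) : R := q ^+ #|S| * (1 - q) ^+ (m - #|S|).

Lemma sum_flip_weight : \sum_S flip_weight S = 1.
Proof.
have -> : 1 = \prod_(i < m) (q + (1 - q)) by rewrite subrKC prodr_const expr1n.
rewrite bigA_distr; apply: eq_bigr => S _; rewrite (bigID (mem S)) /= /flip_weight.
rewrite -[m in (m - _)%N](card_ord m) -(cardC S) addKn -!prodr_const.
by congr (_ * _); apply: eq_bigr => i; [move-> | move/negbTE->].
Qed.

Hypotheses (q_ge0 : 0 <= q) (q_lt1 : q < 1).

Lemma flip_weight_ge0 S : 0 <= flip_weight S.
Proof. by rewrite mulr_ge0 ?exprn_ge0 // subr_ge0 ltW. Qed.

Lemma flip_weight0_gt0 : 0 < flip_weight set0.
Proof. by rewrite /flip_weight cards0 mul1r exprn_gt0 // subr_gt0. Qed.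

Variables N1 N2 : nat.
Implicit Types (p : 'I_m -> cell N1 N2) (t : 'I_m -> bool).

Lemma prob_no_delayS n p t : prob_no_delay q n.+1 p t =
  if no_delay p t then
    \sum_S flip_weight S * prob_no_delay q n (step_pos p t) (flip t S)
  else 0.
Proof. by []. Qed.

Lemma prob_no_delay_ge0_le1 n p t : 0 <= prob_no_delay q n p t <= 1.
Proof.
elim: n p t => [|n IHn] p t; first by rewrite ler01 lexx.
rewrite prob_no_delayS; case: no_delay; last by rewrite lexx ler01.
apply/andP; split.
  apply: sumr_ge0 => S _; have /andP[P_ge0 _] := IHn (step_pos p t) (flip t S).
  exact: mulr_ge0 (flip_weight_ge0 S) P_ge0.
rewrite -sum_flip_weight; apply: ler_sum => S _.
have /andP[_ P_le1] := IHn (step_pos p t) (flip t S).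
exact: ler_piMr (flip_weight_ge0 S) P_le1.
Qed.

Lemma flip_set0 t : flip t set0 = t.
Proof. by apply: boolp.funext => k; rewrite /flip in_set0. Qed.

Lemma prob_no_delayS_eq1 n p t : prob_no_delay q n.+1 p t = 1 ->
  no_delay p t /\ prob_no_delay q n (step_pos p t) t = 1.
Proof.
rewrite prob_no_delayS; case: no_delay => [sum_eq1|/esym/eqP]; last by rewrite oner_eq0.
split=> //; rewrite -[in RHS]sum_flip_weight in sum_eq1.
have := weighted_sum_eq1 (x := fun S => prob_no_delay q n (step_pos p t) (flip t S))
  flip_weight_ge0 _ sum_eq1 flip_weight0_gt0.
rewrite flip_set0; apply=> S.
by have /andP[] := prob_no_delay_ge0_le1 n (step_pos p t) (flip t S).
Qed.

Lemma free_movement_step p t :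
  free_movement q p t -> no_delay p t /\ free_movement q (step_pos p t) t.
Proof.
move=> free; split; first by have [] := prob_no_delayS_eq1 (free 1%N).
by move=> n; have [] := prob_no_delayS_eq1 (free n.+1).
Qed.

Lemma free_movement_traj p t :
  free_movement q p t -> forall n, no_delay (traj t p n) t.
Proof.
move=> free n.
have free_n : free_movement q (traj t p n) t.
  by elim: n => [|n IHn] //; exact: (free_movement_step IHn).2.
exact: (free_movement_step free_n).1.
Qed.

End FreeMovement.

Unset Implicit Arguments.
Theorem theorem1 (R : realType) (N1 N2 m : nat) (q : R)
  (hN1 : (0 < N1)%N) (hN2 : (0 < N2)%N) (hq0 : 0 <= q) (hq1 : q < 1)
  (hm : (m < N1 * N2)%N) (hgcd : (gcdn N1 N2 < 3)%N)
  (p : 'I_m -> cell N1 N2) (t : 'I_m -> bool)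
  (hp : injective p) (h1 : exists k, t k) (h2 : exists k, ~~ t k) :
  ~ free_movement q p t.
Proof.
move=> /(free_movement_traj hq0 hq1) nd; case: h1 => A tA; case: h2 => B tB.
have [n [A_meets_col_B B_meets_row_A]] :=
  ordS_meeting_time (p A).1 (p B).1 (p A).2 (p B).2 hgcd.
have := traj_no_delay n A nd; have := traj_no_delay n B nd.
rewrite tA (negbTE tB) => PB PA.
case: B_meets_row_A => [B_below|B_right].
- have /negP := no_delay_down (nd n) tA tB; apply; apply/eqP.
  by rewrite PA PB /right_of /down_of /= -!iterS A_meets_col_B B_below.
- have /negP := no_delay_right B (nd n) tA; apply; apply/eqP.
  by rewrite PA PB /right_of /= -iterS A_meets_col_B B_right.
Qed.
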